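(* Let $P\subseteq\mathbb{R}^n$ be an $n$-dimensional lattice simplex, with vertices $v_0,\dots,v_n$, and let $a_i$ be the lattice distance of $v_i$ from the facet of $P$ not containing $v_i$. (1) If $\mu(P)>\frac{n+1}{2}$, or if $\mu(P)=\frac{n+1}{2}$ and $a_i\neq2$ for some $i$, then $P$ is a lattice pyramid. (2) If $\mu(P)\ge\frac{n+1}{2}$ and $P$ is not unimodularly equivalent to $2\Delta_n$, then $P$ has lattice width one.
   Context: Lattice distance from a facet $F=\{\langle c,x\rangle=b\}$ (with $c\in(\mathbb{Z}^n)^*$ primitive inner normal) is $d_F(y)=\langle c,y\rangle-b$; $d_P(y):=\min_F d_F(y)$ over facets, $P^{(s)}:=\{y:d_P(y)\ge s\}$, $\mu(P):=(\sup\{s>0:P^{(s)}\neq\emptyset\})^{-1}$. A lattice simplex is a lattice pyramid if some vertex has lattice distance $1$ from the opposite facet (i.e. $P$ is unimodularly equivalent to $\mathrm{conv}(Q\times\{0\},(0,\dots,0,1))$ for a lattice polytope $Q\subseteq\mathbb{R}^{n-1}$). $\Delta_n=\mathrm{conv}(0,e_1,\dots,e_n)$. The lattice width of $P$ is the minimum over nonzero $u\in(\mathbb{Z}^n)^*$ of $\max_{x\in P}\langle u,x\rangle-\min_{x\in P}\langle u,x\rangle$. Unimodular equivalence is via an affine lattice automorphism of $\mathbb{Z}^n$. *)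

From HB Require Import structures.
From mathcomp Require Import all_boot all_order all_algebra.
From mathcomp Require Import classical_sets reals.
Set Implicit Arguments. Unset Strict Implicit. Unset Printing Implicit Defensive.
Import Order.TTheory GRing.Theory Num.Theory.
Local Open Scope classical_set_scope.
Local Open Scope ring_scope.

Section LatticeSimplex.
Variables (R : realType) (n : nat).

Definition dotZ (c : 'rV[int]_n) (y : 'rV[R]_n) : R :=
  \sum_(k < n) (c 0 k)%:~R * y 0 k.

Definition primitive (c : 'rV[int]_n) : Prop :=
  forall d : int, (forall k, (d %| c ord0 k)%Z) -> `|d| = 1.

Definition vR (v : 'I_n.+1 -> 'rV[int]_n) (i : 'I_n.+1) : 'rV[R]_n :=
  map_mx (fun z : int => z%:~R) (v i).

Definition full_dim (v : 'I_n.+1 -> 'rV[int]_n) : Prop :=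
  \det (\matrix_(i < n, k < n) (v (lift ord0 i) 0 k - v ord0 0 k)) != 0.

Definition facet_normal (v : 'I_n.+1 -> 'rV[int]_n) (i : 'I_n.+1)
    (c : 'rV[int]_n) (b : int) : Prop :=
  [/\ primitive c,
      (forall j, j != i -> dotZ c (vR v j) = b%:~R) &
      b%:~R < dotZ c (vR v i)].

(* P^(s) = { y : d_P(y) >= s }, d_P = min over facets of lattice distance *)
Definition Pshrink (v : 'I_n.+1 -> 'rV[int]_n) (s : R) : set 'rV[R]_n :=
  [set y | forall i c b, facet_normal v i c b -> s <= dotZ c y - b%:~R].

Definition mu (v : 'I_n.+1 -> 'rV[int]_n) : R :=
  (sup [set s : R | 0 < s /\ Pshrink v s !=set0])^-1.

Definition vertex_dist_is (v : 'I_n.+1 -> 'rV[int]_n) (i : 'I_n.+1) (a : R) : Prop :=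
  forall c b, facet_normal v i c b -> dotZ c (vR v i) - b%:~R = a.

Definition lattice_pyramid (v : 'I_n.+1 -> 'rV[int]_n) : Prop :=
  exists i, vertex_dist_is v i 1.

Definition conv (v : 'I_n.+1 -> 'rV[int]_n) : set 'rV[R]_n :=
  [set y | exists l : 'I_n.+1 -> R,
     [/\ (forall i, 0 <= l i), \sum_i l i = 1 & y = \sum_i l i *: vR v i]].

Definition two_delta : 'I_n.+1 -> 'rV[int]_n :=
  fun i => \row_(k < n) (if i == lift ord0 k then 2 else 0).

Definition unimod_equiv (P Q : set 'rV[R]_n) : Prop :=
  exists (U : 'M[int]_n) (t : 'rV[int]_n),
    (\det U = 1 \/ \det U = -1) /\
    [set y *m map_mx (fun z : int => z%:~R) U + map_mx (fun z : int => z%:~R) t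
       | y in P] = Q.

Definition width_dir (P : set 'rV[R]_n) (u : 'rV[int]_n) : R :=
  sup [set dotZ u x | x in P] - inf [set dotZ u x | x in P].

Definition lattice_width_one (P : set 'rV[R]_n) : Prop :=
  (exists u, u != 0 /\ width_dir P u = 1) /\
  (forall u, u != 0 -> 1 <= width_dir P u).

End LatticeSimplex.

(* With a_i the lattice distance of v_i from the opposite facet F_i, the
   affine function sum_i d_(F_i)(y) / a_i equals 1 at every vertex, hence
   everywhere; so d_P is maximal where all d_(F_i) agree, and mu(P) = sum_i 1/a_i.
   If some a_i = 1, P is a lattice pyramid and has width one in the direction of
   the normal of F_i. Otherwise every a_i >= 2, so mu(P) <= (n+1)/2 with equality
   only if every a_i = 2. In that case the matrix W whose columns are the normals
   of the facets through v_0 satisfies (v_i - v_0) W = 2 e_i. If W is singular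
   mod 2, a 0/1 kernel vector e gives the integral form W e / 2, which takes only
   two consecutive values on the vertices; otherwise det W is odd and divides
   2^n, so W is unimodular and x |-> (x - v_0) W maps P onto 2 Delta_n. *)

From HB Require Import structures.
From mathcomp Require Import all_boot all_order all_algebra.
From mathcomp Require Import classical_sets reals boolp.
From mathcomp Require Import zify ring lra.
Import Order.TTheory GRing.Theory Num.Theory.
Local Open Scope classical_set_scope.
Local Open Scope ring_scope.
Set Implicit Arguments. Unset Strict Implicit. Unset Printing Implicit Defensive.

Local Notation intmx := (map_mx (fun z : int => z%:~R)).

Section DotProduct.
Variables (T : comRingType) (n : nat).
Implicit Types (c x : 'rV[T]_n).

Definition dot c x : T := \sum_(k < n) c 0 k * x 0 k.

Lemma dotNl c x : dot (- c) x = - dot c x.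
Proof. by rewrite /dot -sumrN; apply: eq_bigr => k _; rewrite mxE mulNr. Qed.

Lemma dotZl a c x : dot (a *: c) x = a * dot c x.
Proof. by rewrite /dot mulr_sumr; apply: eq_bigr => k _; rewrite mxE mulrA. Qed.

Lemma dotBl c c' x : dot (c - c') x = dot c x - dot c' x.
Proof. by rewrite /dot -sumrB; apply: eq_bigr => k _; rewrite !mxE mulrBl. Qed.

Lemma dot0l x : dot 0 x = 0.
Proof. by rewrite /dot big1 // => k _; rewrite mxE mul0r. Qed.

Lemma dot_suml (I : finType) (l : I -> T) (c : I -> 'rV[T]_n) x :
  dot (\sum_i l i *: c i) x = \sum_i l i * dot (c i) x.
Proof.
rewrite /dot; under eq_bigr => k _ do rewrite summxE mulr_suml.
rewrite exchange_big; apply: eq_bigr => i _; rewrite -dotZl.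
by apply: eq_bigr => k _; rewrite mxE.
Qed.

Lemma dot_sumr (I : finType) (l : I -> T) c (x : I -> 'rV[T]_n) :
  dot c (\sum_i l i *: x i) = \sum_i l i * dot c (x i).
Proof.
rewrite /dot; under eq_bigr => k _ do rewrite summxE mulr_sumr.
rewrite exchange_big; apply: eq_bigr => i _; rewrite mulr_sumr.
by apply: eq_bigr => k _; rewrite mxE mulrCA.
Qed.

Definition edge_mx (x : 'I_n.+1 -> 'rV[T]_n) : 'M[T]_n :=
  \matrix_(i < n, k < n) (x (lift ord0 i) 0 k - x ord0 0 k).

Lemma edge_mxE (x : 'I_n.+1 -> 'rV[T]_n) c i :
  (edge_mx x *m c^T) i 0 = dot c (x (lift ord0 i)) - dot c (x ord0).
Proof.
rewrite !mxE /dot -sumrB; apply: eq_bigr => k _.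
by rewrite /edge_mx !mxE mulrC mulrBr.
Qed.

Lemma row_edge_mx (x : 'I_n.+1 -> 'rV[T]_n) i :
  row i (edge_mx x) = x (lift ord0 i) - x ord0.
Proof. by apply/rowP => k; rewrite !mxE. Qed.

(* The column [t] lists the differences of the values [(i == j)] at [x j] and [x 0];
   the adjugate solves [edge_mx x *m c^T = \det (edge_mx x) *: t]. *)
Lemma separating_form (x : 'I_n.+1 -> 'rV[T]_n) i :
  exists c b, forall j, dot c (x j) = b + \det (edge_mx x) *+ (i == j).
Proof.
pose t : 'cV[T]_n := \col_k ((i == lift ord0 k)%:R - (i == ord0)%:R).
pose c := (\adj (edge_mx x) *m t)^T.
exists c, (dot c (x ord0) - \det (edge_mx x) *+ (i == ord0)) => j.
case: (unliftP ord0 j) => [k ->|->]; last by rewrite subrK.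
have := edge_mxE x c k; rewrite trmxK mulmxA mul_mx_adj mul_scalar_mx.
rewrite !mxE mulrBr !mulr_natr => /eqP; rewrite eq_sym subr_eq => /eqP ->.
by rewrite addrC addrA addrAC.
Qed.

End DotProduct.

Lemma affine_vanishing (F : fieldType) n (x : 'I_n.+1 -> 'rV[F]_n) (L : 'rV[F]_n) k :
  \det (edge_mx x) != 0 -> (forall j, dot L (x j) + k = 0) -> L = 0 /\ k = 0.
Proof.
move=> detE0 vanish.
have EL : edge_mx x *m L^T = 0.
  apply/matrixP => i j; rewrite (ord1 j) edge_mxE mxE.
  by apply/eqP; rewrite subr_eq0 -(inj_eq (addIr k)) !vanish.
have L0 : L = 0.
  have Eunit : edge_mx x \in unitmx by rewrite unitmxE unitfE.
  by apply: trmx_inj; rewrite -(mulKmx Eunit L^T) EL mulmx0 trmx0.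
by split=> //; have := vanish ord0; rewrite L0 dot0l add0r.
Qed.

Section PrimitiveVectors.
Variable n : nat.
Implicit Types c : 'rV[int]_n.

Lemma primitive_decomp c : c != 0 ->
  exists2 g : int, 0 < g & exists2 c', primitive c' & c = g *: c'.
Proof.
move=> c_neq0; pose g := \big[gcdn/0%N]_k `|c ord0 k|%N.
have g_dvd k : (g%:Z %| c ord0 k)%Z by rewrite dvdzE; apply: biggcdn_inf.
have g_gt0 : (0 < g)%N.
  rewrite lt0n; apply: contraNneq c_neq0 => g0; apply/eqP/rowP => k.
  by apply/eqP; move: (g_dvd k); rewrite g0 dvd0z !mxE.
exists g%:Z => //; exists (\row_k (c ord0 k %/ g%:Z)%Z); last first.
  by apply/rowP => k; rewrite !mxE mulrC divzK.
move=> d d_dvd; have : (`|d| * g %| 1 * g)%N.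
  rewrite mul1n {2}/g; apply/dvdn_biggcdP => k _.
  by have := dvdz_mul (d_dvd k) (dvdzz g%:Z); rewrite mxE divzK // dvdzE abszM.
by rewrite dvdn_pmul2r // dvdn1 -abszE => /eqP ->.
Qed.

(* Writing [a = g p] and [a' = g q] with [p], [q] coprime, [p] divides every entry of [c]. *)
Lemma primitive_proportional (a a' : int) c c' :
  0 < a -> 0 < a' -> primitive c -> primitive c' -> a *: c' = a' *: c -> c' = c.
Proof.
move=> a_gt0 a'_gt0 prim_c prim_c' eq_ac.
have eqk k : a * c' ord0 k = a' * c ord0 k.
  by have := congr1 (fun w : 'rV[int]_n => w ord0 k) eq_ac; rewrite !mxE.
pose g := gcdz a a'.
have g_gt0 : 0 < g by rewrite ltz_nat gcdn_gt0 absz_gt0 gt_eqF.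
have aE : a = (a %/ g)%Z * g by rewrite divzK // dvdz_gcdl.
have a'E : a' = (a' %/ g)%Z * g by rewrite divzK // dvdz_gcdr.
set p := (a %/ g)%Z in aE; set q := (a' %/ g)%Z in a'E.
have cop : coprimez p q.
  apply/eqP/(mulIf (lt0r_neq0 g_gt0)).
  by rewrite mul1r -{1}[g]gtz0_abs // mulz_gcdl -aE -a'E.
have pq k : p * c' ord0 k = q * c ord0 k.
  by apply: (mulIf (lt0r_neq0 g_gt0)); rewrite mulrAC -aE mulrAC -a'E eqk.
have p1 : `|p| = 1.
  by apply: prim_c => k; rewrite -(Gauss_dvdzr _ cop) -pq dvdz_mulr.
have q1 : `|q| = 1.
  apply: prim_c' => k; rewrite coprimez_sym in cop.
  by rewrite -(Gauss_dvdzr _ cop) pq dvdz_mulr.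
have p_gt0 : 0 < p by move: a_gt0; rewrite aE pmulr_lgt0.
have q_gt0 : 0 < q by move: a'_gt0; rewrite a'E pmulr_lgt0.
have pq_eq : p = q by lia.
apply/rowP => k; apply: (mulfI (lt0r_neq0 p_gt0)).
by rewrite pq {1}pq_eq.
Qed.

End PrimitiveVectors.

Lemma dvd2z_F2 (z : int) : (2 %| z)%Z = (z%:~R == 0 :> 'F_2).
Proof. exact: dvdz_pcharf (pchar_Fp (isT : prime 2)) z. Qed.

Lemma int_mx_kernel_mod2 n (A : 'M[int]_n) :
  \det (map_mx (fun z : int => z%:~R : 'F_2) A) = 0 ->
  exists e : 'cV[int]_n,
    [/\ e != 0, forall k, e k 0 = 0 \/ e k 0 = 1 & forall k, (2 %| (A *m e) k ord0)%Z].
Proof.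
set A2 := map_mx _ A => detA2; have /det0P [w w_neq0 wA] : \det A2^T == 0.
  by rewrite det_tr detA2.
pose e : 'cV[int]_n := \col_k (w 0 k : nat)%:Z.
have eE k : (e k 0)%:~R = w 0 k by rewrite mxE; exact: natr_Zp.
exists e; split=> [||k].
- by apply: contraNneq w_neq0 => e0; apply/eqP/rowP => k; rewrite -eE e0 !mxE mulr0z.
- move=> k; rewrite mxE; have : (w ord0 k < 2)%N by [].
  by case: (nat_of_ord _) => [|[|]] //; [left|right].
have eF2 : map_mx (fun z : int => z%:~R : 'F_2) e = w^T.
  by apply/matrixP => i j; rewrite (ord1 j) [LHS]mxE eE mxE.
have Ae : map_mx (fun z : int => z%:~R : 'F_2) (A *m e) = 0.
  by rewrite map_mxM eF2 -/A2 -[A2]trmxK -trmx_mul wA trmx0.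
by move/matrixP/(_ k ord0): Ae; rewrite dvd2z_F2 !mxE => ->.
Qed.

Lemma odd_dvd_pow2 (z : int) m : ~~ (2 %| z)%Z -> (z %| 2 ^+ m)%Z -> z = 1 \/ z = -1.
Proof.
move=> z_odd z_dvd; have cop : coprime `|z| (2 ^ m).
  by rewrite coprimeXr // coprimen2; move: z_odd; rewrite dvdzE /= dvdn2 negbK.
have : `|z|%N = 1%N.
  by move: z_dvd; rewrite dvdzE abszX /= => /gcdn_idPl; move: cop; rewrite /coprime => /eqP ->.
lia.
Qed.

Lemma inv_le_half_iff (F : numFieldType) (z : int) :
  2 <= z -> ((z%:~R : F)^-1 <= 2^-1 ?= iff (z == 2)).
Proof.
move=> z_ge2; have z_gt0 : 0 < z%:~R :> F by rewrite ltr0z; lia.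
have -> : 2 = 2%:~R :> F by [].
split; first by rewrite lef_pV2 ?posrE ?ler_int.
by rewrite (inj_eq (@invr_inj _)) eqr_int.
Qed.

Lemma sum_inv_le_half (F : numFieldType) m (a : 'I_m -> int) :
  (forall i, 2 <= a i) ->
  \sum_i ((a i)%:~R : F)^-1 <= m%:R / 2 ?= iff [forall i, a i == 2].
Proof.
move=> a_ge2; have -> : m%:R / 2 = \sum_(i < m) (2 : F)^-1.
  by rewrite sumr_const card_ord mulr_natl.
by apply: leif_sum => i _; apply: inv_le_half_iff.
Qed.

Lemma unimod_equiv_conv (R : realType) n (v w : 'I_n.+1 -> 'rV[int]_n)
    (U : 'M[int]_n) (t : 'rV[int]_n) :
  \det U = 1 \/ \det U = -1 -> (forall j, v j *m U + t = w j) ->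
  unimod_equiv (conv (R := R) v) (conv (R := R) w).
Proof.
move=> detU vw; exists U, t; split=> //.
have comb l : \sum_i l i = 1 ->
    (\sum_i l i *: vR R v i) *m intmx U + intmx t = \sum_i l i *: vR R w i.
  move=> l_sum1; have tE : intmx t = \sum_i l i *: intmx t.
    by rewrite -scaler_suml l_sum1 scale1r.
  rewrite mulmx_suml tE -big_split /=; apply: eq_bigr => i _.
  by rewrite -scalemxAl -scalerDr /vR -vw map_mxD map_mxM.
apply/seteqP; split.
- by move=> _ [_ [l [l_ge0 l_sum1 ->]] <-]; exists l; rewrite comb.
- move=> _ [l [l_ge0 l_sum1 ->]]; exists (\sum_i l i *: vR R v i); last exact: comb.
  by exists l.
Qed.

Lemma sup_eq_max (R : realType) (E : set R) x : E x -> ubound E x -> sup E = x.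
Proof.
move=> Ex ubx; apply/le_anti/andP; split; first exact: ge_sup (ex_intro _ x Ex) ubx.
by apply: ub_le_sup Ex; exists x.
Qed.

Lemma inf_eq_min (R : realType) (E : set R) x : E x -> lbound E x -> inf E = x.
Proof.
move=> Ex lbx; apply/le_anti/andP; split; last exact: lb_le_inf (ex_intro _ x Ex) lbx.
by apply: ge_inf Ex; exists x.
Qed.

Section LatticeSimplex.
Variables (R : realType) (n : nat) (v : 'I_n.+1 -> 'rV[int]_n).
Hypotheses (n_gt0 : (0 < n)%N) (fd : full_dim v).

Local Notation P := (conv (R := R) v).

Lemma dotZE c (y : 'rV[R]_n) : dotZ c y = dot (intmx c) y.
Proof. by apply: eq_bigr => k _; rewrite mxE. Qed.

Lemma dot_intmx (c x : 'rV[int]_n) : dot (intmx c) (intmx x) = (dot c x)%:~R :> R.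
Proof. by rewrite /dot rmorph_sum; apply: eq_bigr => k _; rewrite !mxE rmorphM. Qed.

Lemma dotZ_vR c j : dotZ c (vR R v j) = (dot c (v j))%:~R.
Proof. by rewrite dotZE dot_intmx. Qed.

Lemma det_edge_vR_neq0 : \det (edge_mx (vR R v)) != 0.
Proof.
have -> : edge_mx (vR R v) = intmx (edge_mx v).
  by apply/matrixP => i k; rewrite /edge_mx !mxE intrB.
by rewrite det_map_mx intr_eq0.
Qed.

Lemma affine_vanishing_int (c : 'rV[int]_n) (k : int) :
  (forall j, dot c (v j) + k = 0) -> c = 0.
Proof.
move=> vanish; have [c0 _] : intmx c = 0 :> 'rV[R]_n /\ k%:~R = 0 :> R.
  by apply: affine_vanishing det_edge_vR_neq0 _ => j; rewrite dot_intmx -intrD vanish.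
apply/rowP => i; apply/eqP; rewrite mxE -(intr_eq0 R).
by have := congr1 (fun w : 'rV[R]_n => w 0 i) c0; rewrite !mxE => ->.
Qed.

Lemma facet_normalE i c b : facet_normal R v i c b <->
  [/\ primitive c, forall j, j != i -> dot c (v j) = b & b < dot c (v i)].
Proof.
rewrite /facet_normal dotZ_vR ltr_int.
split=> -[prim_c eq_b b_lt]; split=> // j /eq_b; first by rewrite dotZ_vR => /intr_inj.
by rewrite dotZ_vR => ->.
Qed.

Lemma exists_neq (i : 'I_n.+1) : exists j, j != i.
Proof. by exists (lift i (Ordinal n_gt0)); rewrite eq_sym neq_lift. Qed.

Lemma facet_normal_exists i : exists c b, facet_normal R v i c b.
Proof.
have [c0 [b0 [d [d_gt0 sep]]]] :
    exists c0 b0 (d : int), 0 < d /\ forall j, dot c0 (v j) = b0 + d *+ (i == j).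
  have [c0 [b0 sep]] := separating_form v i.
  case: (ltgtP (\det (edge_mx v)) 0) => [det_lt0|det_gt0|det0]; last first.
  - by move: fd; rewrite /full_dim -/(edge_mx v) det0 eqxx.
  - by exists c0, b0, (\det (edge_mx v)).
  exists (- c0), (- b0), (- \det (edge_mx v)); split=> [|j]; first by rewrite oppr_gt0.
  by rewrite dotNl sep opprD mulNrn.
have [j0 j0_neq_i] := exists_neq i.
have c0_neq0 : c0 != 0.
  apply: contraTneq d_gt0 => c00; move: (sep i) (sep j0).
  by rewrite c00 !dot0l eqxx eq_sym (negbTE j0_neq_i) mulr1n mulr0n; lia.
have [g g_gt0 [c prim_c c0E]] := primitive_decomp c0_neq0.
have dotc0 x : dot c0 x = g * dot c x by rewrite c0E dotZl.
exists c, (dot c (v j0)); apply/facet_normalE; split=> // [j j_neq_i|].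
  apply: (mulfI (lt0r_neq0 g_gt0)); rewrite -!dotc0 !sep !(eq_sym i).
  by rewrite (negbTE j_neq_i) (negbTE j0_neq_i).
by rewrite -(ltr_pM2l g_gt0) -!dotc0 !sep eqxx (eq_sym i) (negbTE j0_neq_i) ltrD2l.
Qed.

Lemma facet_normal_unique i c b c' b' :
  facet_normal R v i c b -> facet_normal R v i c' b' -> c' = c /\ b' = b.
Proof.
move=> /facet_normalE [prim_c eq_b b_lt] /facet_normalE [prim_c' eq_b' b'_lt].
pose a := dot c (v i) - b; pose a' := dot c' (v i) - b'.
have c'c : c' = c.
  apply: (primitive_proportional (a := a) (a' := a')); rewrite ?subr_gt0 //.
  apply/eqP; rewrite -subr_eq0; apply/eqP.
  apply: (affine_vanishing_int (k := a' * b - a * b')) => j.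
  rewrite dotBl !dotZl; have [->|j_neq_i] := eqVneq j i; first by rewrite /a /a'; ring.
  by rewrite eq_b // eq_b' //; ring.
have [j0 j0_neq_i] := exists_neq i.
by split=> //; rewrite -(eq_b _ j0_neq_i) -(eq_b' _ j0_neq_i) c'c.
Qed.

Lemma facet_normals_exist :
  exists N : 'I_n.+1 -> 'rV[int]_n * int, forall i, facet_normal R v i (N i).1 (N i).2.
Proof.
have normal_exists i : exists cb : 'rV[int]_n * int, facet_normal R v i cb.1 cb.2.
  by have [c [b normal_cb]] := facet_normal_exists i; exists (c, b).
by have [N normalN] := choice normal_exists; exists N.
Qed.

Lemma dotZ_affine_comb c b (l : 'I_n.+1 -> R) : \sum_i l i = 1 ->
  dotZ c (\sum_i l i *: vR R v i) - b = \sum_i l i * ((dot c (v i))%:~R - b).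
Proof.
move=> l_sum1; have bE : b = \sum_i l i * b by rewrite -mulr_suml l_sum1 mul1r.
rewrite dotZE dot_sumr {1}bE -sumrB.
by apply: eq_bigr => i _; rewrite -dotZE dotZ_vR mulrBr.
Qed.

Lemma conv_vertex j : P (vR R v j).
Proof.
exists (fun i => (i == j)%:R); split=> [i||]; first by rewrite ler0n.
  by rewrite (bigD1 j) //= eqxx big1 ?addr0 // => i /negbTE ->.
by rewrite (bigD1 j) //= eqxx scale1r big1 ?addr0 // => i /negbTE ->; rewrite scale0r.
Qed.

Lemma dotZ_conv_bounds u x (m M : R) : P x ->
  (forall j, m <= (dot u (v j))%:~R <= M) -> m <= dotZ u x <= M.
Proof.
move=> [l [l_ge0 l_sum1 ->]] mM; rewrite -[dotZ _ _]subr0 dotZ_affine_comb //.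
have constE (r : R) : r = \sum_i l i * r by rewrite -mulr_suml l_sum1 mul1r.
rewrite (constE m) (constE M).
by apply/andP; split; apply: ler_sum => i _; rewrite subr0 ler_wpM2l //; case/andP: (mM i).
Qed.

Lemma width_dir_ge_vertex_diff u j j' :
  (dot u (v j))%:~R - (dot u (v j'))%:~R <= width_dir P u.
Proof.
pose B := \sum_i `|dot u (v i)|.
have B_bounds x : P x -> (- B)%:~R <= dotZ u x <= B%:~R.
  move=> /dotZ_conv_bounds; apply=> i; rewrite !ler_int -ler_norml /B (bigD1 i) //=.
  by rewrite lerDl sumr_ge0.
pose S := [set dotZ u x | x in P].
have S_vertex i : S (dot u (v i))%:~R.
  by exists (vR R v i); [exact: conv_vertex | rewrite dotZ_vR].
rewrite /width_dir -/S; apply: lerB.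
  by apply: ub_le_sup (S_vertex j); exists B%:~R => _ [x /B_bounds /andP [_ ?] <-].
by apply: ge_inf (S_vertex j'); exists (- B)%:~R => _ [x /B_bounds /andP [? _] <-].
Qed.

Lemma width_dir_ge1 u : u != 0 -> 1 <= width_dir P u.
Proof.
move=> u_neq0; have /existsP [j dot_neq] : [exists j, dot u (v j) != dot u (v ord0)].
  apply: contraNT u_neq0 => /existsPn dot_eq; apply/eqP.
  apply: (affine_vanishing_int (k := - dot u (v ord0))) => j.
  by move/negPn/eqP: (dot_eq j) => ->; rewrite subrr.
have [lt|lt] : dot u (v j) + 1 <= dot u (v ord0) \/ dot u (v ord0) + 1 <= dot u (v j).
  by move: dot_neq; lia.
- apply: le_trans _ (width_dir_ge_vertex_diff u ord0 j).
  by rewrite lerBrDr addrC -[1]/(1%:~R) -intrD ler_int.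
- apply: le_trans _ (width_dir_ge_vertex_diff u j ord0).
  by rewrite lerBrDr addrC -[1]/(1%:~R) -intrD ler_int.
Qed.

Lemma lattice_width_one_slab u (t : int) :
  (forall j, t <= dot u (v j) <= t + 1) ->
  (exists j, dot u (v j) = t) -> (exists j, dot u (v j) = t + 1) ->
  lattice_width_one P.
Proof.
move=> slab [j0 lo] [j1 hi].
have u_neq0 : u != 0 by apply/eqP => u0; move: lo hi; rewrite u0 !dot0l; lia.
split=> [|w /width_dir_ge1 //]; exists u; split=> //.
have slabR x : P x -> t%:~R <= dotZ u x <= (t + 1)%:~R.
  by move/dotZ_conv_bounds; apply=> j; rewrite !ler_int.
rewrite /width_dir (sup_eq_max (x := (t + 1)%:~R)) ?(inf_eq_min (x := t%:~R)).
- by rewrite intrD addrAC subrr add0r.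
- by exists (vR R v j0); [exact: conv_vertex | rewrite dotZ_vR lo].
- by move=> _ [x /slabR /andP [? _] <-].
- by exists (vR R v j1); [exact: conv_vertex | rewrite dotZ_vR hi].
- by move=> _ [x /slabR /andP [_ ?] <-].
Qed.

Section FacetNormals.
Variable N : 'I_n.+1 -> 'rV[int]_n * int.
Hypothesis normalN : forall i, facet_normal R v i (N i).1 (N i).2.

Definition vdist i : int := dot (N i).1 (v i) - (N i).2.

Lemma vdist_gt0 i : 0 < vdist i.
Proof. by have /facet_normalE [_ _] := normalN i; rewrite subr_gt0. Qed.

Lemma dot_normal i j : dot (N i).1 (v j) = (N i).2 + vdist i *+ (i == j).
Proof.
have /facet_normalE [_ eq_b _] := normalN i.
by have [<-|j_neq_i] := eqVneq i j; [rewrite addrC subrK | rewrite eq_b 1?eq_sym ?addr0].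
Qed.

Lemma facet_normal_vdist i c b :
  facet_normal R v i c b -> dotZ c (vR R v i) - b%:~R = (vdist i)%:~R.
Proof. by move=> /(facet_normal_unique (normalN i)) [-> ->]; rewrite dotZ_vR intrB. Qed.

(* Both sides are affine in [y]; they agree on the vertices, hence everywhere. *)
Lemma sum_facet_dist_ratio (y : 'rV[R]_n) :
  \sum_i (dotZ (N i).1 y - ((N i).2)%:~R) / (vdist i)%:~R = 1.
Proof.
have vdistR_neq0 i : (vdist i)%:~R != 0 :> R by rewrite intr_eq0 lt0r_neq0 ?vdist_gt0.
pose L : 'rV[R]_n := \sum_i ((vdist i)%:~R)^-1 *: intmx (N i).1.
pose s := \sum_i ((N i).2)%:~R / (vdist i)%:~R : R.
have affE x : \sum_i (dotZ (N i).1 x - ((N i).2)%:~R) / (vdist i)%:~R = dot L x - s.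
  rewrite dot_suml -sumrB; apply: eq_bigr => i _.
  by rewrite dotZE mulrBl mulrC.
have [L0 s1] : L = 0 /\ - s - 1 = 0.
  apply: affine_vanishing det_edge_vR_neq0 _ => j.
  rewrite addrA -affE (bigD1 j) //= big1 => [|i /negbTE i_neq_j].
    rewrite dotZ_vR dot_normal eqxx mulr1n intrD (addrC ((N j).2%:~R)) addrK.
    by rewrite divff // addr0 subrr.
  by rewrite dotZ_vR dot_normal i_neq_j addr0 subrr mul0r.
by rewrite affE L0 dot0l; lra.
Qed.

(* The maximum of [d_P] is attained at the point whose barycentric coordinates are
   proportional to the [1 / vdist i]: there all facet distances are equal. *)
Lemma mu_sum_inv_vdist : mu R v = \sum_i ((vdist i)%:~R)^-1.
Proof.
have vdistR_gt0 i : 0 < (vdist i)%:~R :> R by rewrite ltr0z vdist_gt0.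
set T := \sum_i _; have T_gt0 : 0 < T.
  rewrite /T (bigD1 ord0) //= ltr_wpDr ?invr_gt0 //.
  by apply: sumr_ge0 => i _; rewrite invr_ge0 ltW.
rewrite /mu -[T]invrK; congr GRing.inv; apply: sup_eq_max.
  split; first by rewrite invr_gt0.
  exists (\sum_i (T^-1 / (vdist i)%:~R) *: vR R v i).
  move=> i c b /(facet_normal_unique (normalN i)) [-> ->].
  rewrite dotZ_affine_comb; last by rewrite -mulr_sumr mulVf ?gt_eqF.
  rewrite (bigD1 i) //= big1 => [|j /negbTE j_neq_i]; last first.
    by rewrite dot_normal eq_sym j_neq_i addr0 subrr mulr0.
  rewrite dot_normal eqxx mulr1n intrD (addrC ((N i).2%:~R)) addrK.
  by rewrite divfK ?gt_eqF ?addr0.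
move=> s [s_gt0 [y y_in]]; rewrite -(ler_pM2r T_gt0) mulVf ?gt_eqF //.
rewrite -(sum_facet_dist_ratio y) mulr_sumr; apply: ler_sum => i _.
by rewrite ler_pM2r ?invr_gt0 //; apply: y_in.
Qed.

Lemma pyramid_of_vdist1 i : vdist i = 1 -> lattice_pyramid R v.
Proof. by move=> vdist1; exists i => c b /facet_normal_vdist ->; rewrite vdist1. Qed.

Lemma width_one_of_vdist1 i : vdist i = 1 -> lattice_width_one P.
Proof.
move=> vdist1; have [j j_neq_i] := exists_neq i.
apply: (lattice_width_one_slab (u := (N i).1) (t := (N i).2)) => [k||].
- by rewrite dot_normal vdist1; case: (i == k); rewrite ?mulr1n ?mulr0n ?addr0 lexx ?lerDl.
- by exists j; rewrite dot_normal eq_sym (negbTE j_neq_i) addr0.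
- by exists i; rewrite dot_normal eqxx vdist1.
Qed.

Lemma mu_le_half : (forall i, vdist i != 1) ->
  mu R v <= (n.+1)%:R / 2 ?= iff [forall i, vdist i == 2].
Proof.
move=> vdist_neq1; rewrite mu_sum_inv_vdist; apply: sum_inv_le_half => i.
by have := vdist_gt0 i; have := vdist_neq1 i; lia.
Qed.

Section AllDistancesTwo.
Hypothesis vdist2 : forall i, vdist i = 2.

(* Column [j] is the normal of the facet opposite [v (lift ord0 j)]; all these facets
   contain [v 0]. *)
Definition normal_mx : 'M[int]_n := \matrix_(k, j) (N (lift ord0 j)).1 0 k.

Lemma edge_mx_mul_normal_mx : edge_mx v *m normal_mx = 2%:M.
Proof.
apply/matrixP => i j.
have -> : (edge_mx v *m normal_mx) i j = (edge_mx v *m (N (lift ord0 j)).1^T) i 0.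
  by rewrite !mxE; apply: eq_bigr => k _; rewrite !mxE.
rewrite edge_mxE !dot_normal vdist2 (inj_eq lift_inj) [_ == ord0]eq_sym.
by rewrite (negbTE (neq_lift _ _)) mxE mulr0n addr0 addrC addKr eq_sym.
Qed.

Lemma det_edge_mul_normal_mx : \det (edge_mx v) * \det normal_mx = 2 ^+ n.
Proof. by rewrite -det_mulmx edge_mx_mul_normal_mx det_scalar. Qed.

(* A kernel vector [e] of the normal matrix mod 2 yields the integral form
   [u = normal_mx e / 2], which takes the values [e] on the edges from [v 0]. *)
Lemma width_one_of_normal_mx_singular :
  \det (map_mx (fun z : int => z%:~R : 'F_2) normal_mx) = 0 -> lattice_width_one P.
Proof.
move=> /int_mx_kernel_mod2 [e [e_neq0 e01 even]].
pose u : 'rV[int]_n := \row_k ((normal_mx *m e) k ord0 %/ 2)%Z.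
have Eu : edge_mx v *m u^T = e.
  have : 2 *: (edge_mx v *m u^T) = 2 *: e.
    have uE : 2 *: u^T = normal_mx *m e.
      apply/matrixP => k l; have := even k.
      by rewrite (ord1 l) !mxE => ?; rewrite mulrC divzK.
    by rewrite scalemxAr uE mulmxA edge_mx_mul_normal_mx mul_scalar_mx.
  move/matrixP => h; apply/matrixP => k l; apply: (@mulfI _ 2) => //.
  by have := h k l; rewrite !mxE.
have dot_lift k : dot u (v (lift ord0 k)) = dot u (v ord0) + e k 0.
  by have := edge_mxE v u k; rewrite Eu => ->; rewrite addrC subrK.
have /existsP [k /eqP e_k1] : [exists k, e k 0 == 1].
  apply: contraNT e_neq0 => /existsPn e_neq1; apply/eqP/matrixP => k l.
  by rewrite (ord1 l) mxE; case: (e01 k) => // /eqP; rewrite (negbTE (e_neq1 k)).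
apply: (lattice_width_one_slab (u := u) (t := dot u (v ord0))) => [j||].
- case: (unliftP ord0 j) => [k' ->|->]; last by rewrite lexx lerDl.
  by rewrite dot_lift; case: (e01 k') => ->; rewrite ?addr0 lexx ?lerDl.
- by exists ord0.
- by exists (lift ord0 k); rewrite dot_lift e_k1.
Qed.

(* An odd normal matrix is unimodular, and [x |-> (x - v 0) normal_mx] maps the
   vertices onto those of [2 Delta_n]. *)
Lemma two_delta_of_normal_mx_odd :
  ~~ (2 %| \det normal_mx)%Z -> unimod_equiv P (conv (R := R) (@two_delta n)).
Proof.
move=> det_odd.
apply: (unimod_equiv_conv R (U := normal_mx) (t := - (v ord0 *m normal_mx))).
  by apply: (odd_dvd_pow2 (m := n)) det_odd _; rewrite -det_edge_mul_normal_mx dvdz_mull.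
move=> j; rewrite -mulmxBl; case: (unliftP ord0 j) => [i ->|->]; apply/rowP => k.
  rewrite -row_edge_mx -row_mul edge_mx_mul_normal_mx !mxE (inj_eq lift_inj).
  by case: (i == k).
by rewrite subrr mul0mx !mxE (negbTE (neq_lift _ _)).
Qed.

Lemma width_one_of_vdist2 :
  ~ unimod_equiv P (conv (R := R) (@two_delta n)) -> lattice_width_one P.
Proof.
move=> not_equiv.
have [|det_odd] := eqVneq (\det (map_mx (fun z : int => z%:~R : 'F_2) normal_mx)) 0.
  exact: width_one_of_normal_mx_singular.
by exfalso; apply/not_equiv/two_delta_of_normal_mx_odd; rewrite dvd2z_F2 -det_map_mx.
Qed.

End AllDistancesTwo.
End FacetNormals.
End LatticeSimplex.

Unset Implicit Arguments.
Local Close Scope classical_set_scope.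

Theorem corollary3p10 (R : realType) (n : nat) (v : 'I_n.+1 -> 'rV[int]_n) :
  (0 < n)%N -> full_dim v ->
  ( ((n.+1)%:R / 2 < mu R v \/
     (mu R v = (n.+1)%:R / 2 /\
      exists i, forall c b, facet_normal R v i c b -> dotZ c (vR R v i) - b%:~R != 2))
    -> lattice_pyramid R v )
  /\
  ( (n.+1)%:R / 2 <= mu R v ->
    ~ unimod_equiv (conv (R:=R) v) (conv (R:=R) (@two_delta n)) ->
    lattice_width_one (conv (R:=R) v) ).
Proof.
move=> n_gt0 fd; have [N normalN] := facet_normals_exist R n_gt0 fd.
have [[i vdist1]|no_vdist1] := pselect (exists i, vdist v N i = 1).
  split=> [_|_ _]; first exact: (pyramid_of_vdist1 n_gt0 fd normalN vdist1).
  exact: (width_one_of_vdist1 n_gt0 fd normalN vdist1).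
have vdist_neq1 i : vdist v N i != 1 by apply/eqP => vdist1; apply: no_vdist1; exists i.
have [mu_le mu_eq] := mu_le_half n_gt0 fd normalN vdist_neq1.
split=> [[mu_gt|[mu_half [i dist_neq2]]] | mu_ge not_equiv].
- by rewrite ltNge mu_le in mu_gt.
- move: mu_eq; rewrite mu_half eqxx => /esym/forallP/(_ i)/eqP vdist2.
  move: (dist_neq2 _ _ (normalN i)).
  by rewrite (facet_normal_vdist n_gt0 fd normalN (normalN i)) vdist2 eqxx.
- apply: (width_one_of_vdist2 n_gt0 fd normalN) not_equiv => i.
  by move: mu_eq; rewrite eq_le mu_le mu_ge => /esym/forallP/(_ i)/eqP.
Qed.
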